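(* Let $p\ge2$, and let $(V_i)_{i\ge1}$ and the determinants $\mathcal H^{p,m}_n$ be as in the context, with the convention $\mathcal H^{p,m}_{-1}=1$. For $m\in\{0,\ldots,p-1\}$ and $n\in\mathbb N$, \[ V_{pn+m} = \begin{cases} \dfrac{\mathcal H^{p,m}_n\, \mathcal H^{p,m-1}_{n-1}}{\mathcal H^{p,m}_{n-1}\, \mathcal H^{p,m-1}_{n}} & \text{if } m\ge1,\\[2ex] \dfrac{\mathcal H^{p,0}_n\, \mathcal H^{p,p-1}_{n-2}}{\mathcal H^{p,0}_{n-1}\, \mathcal H^{p,p-1}_{n-1}} & \text{if } m=0 \text{ and } n\ge1. \end{cases} \]
   Context: Fix an integer $p\ge 2$. A $p$-constellation is a planar map (proper embedding of a connected graph in the sphere, up to orientation-preserving homeomorphism) whose faces are colored black or white so that adjacent faces have opposite colors, every black face has degree $p$ and every white face has degree a multiple of $p$. Edges are oriented with the white face on their right. Rooted means one edge (root edge) is distinguished; pointed means a vertex (pointed vertex) is distinguished. In a pointed constellation a vertex has type $j$ if $j$ is the minimal length of an oriented path from it to the pointed vertex; an edge has type $j\to j'$ if its origin and endpoint have types $j,j'$. Let $(x_k)_{k\ge1}$ be formal variables, a white face of degree $kp$ having weight $x_k$, and a constellation weighted by the product of its white face weights. For $i\ge1$, $V_i$ is $1$ plus the generating function of pointed rooted $p$-constellations whose root edge is of type $j\to j-1$ for some $j\le i$. A $p$-path is a lattice path in $\mathbb Z\times\mathbb N$ with rises $(1,p-1)$ and falls $(1,-1)$; its weight is the product over its falls of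 $V_i$, $i$ being the starting height of the fall. For $n,r\ge0$, $F_n^{(r)}$ is the sum of the weights of all $p$-paths from $(-r,r)$ to $(np,0)$. For $k\in\mathbb N$ let $q_k=\lfloor k/(p-1)\rfloor$ and $r_k=k-(p-1)q_k$. For $m\in\{0,\ldots,p-1\}$ and $n\in\mathbb N$, $\mathcal H^{p,m}_n:=\det_{0\le i,j\le n}F^{(r_{i+m})}_{q_{i+m}+j}$. *)

From HB Require Import structures.
From mathcomp Require Import all_boot all_order all_algebra all_fingroup.
From mathcomp Require Import mpoly.

Set Implicit Arguments.
Unset Strict Implicit.
Unset Printing Implicit Defensive.

Import GRing.Theory.

(* p-constellations, encoded combinatorially on the edge set 'I_N.           *)
(* b : next edge (in orientation order) around the black face of an edge,   *)
(* w : next edge (in orientation order) around the white face of an edge.   *)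
(* Edges are oriented with the white face on their right, so the endpoint   *)
(* of e is the origin of b e (and of w e).  The vertex rotation acting on   *)
(* outgoing edges is  x |-> w (b^-1 x), whose cycles are the vertices.      *)

Definition vertex_perm N (b w : {perm 'I_N}) : {perm 'I_N} := (b^-1 * w)%g.

(* connected, black faces of degree p, white faces of degree multiple of p, *)
(* planar (Euler: #vertices + #faces = #edges + 2).                         *)
Definition is_constellation (p N : nat) (b w : {perm 'I_N}) : bool :=
  [&& [forall x, #|porbit b x| == p],
      [forall x, p %| #|porbit w x| ],
      [forall x, forall y,
          connect (fun u v : 'I_N => (v == b u) || (v == w u)) x y] &
      (#|porbits (vertex_perm b w)| + #|porbits b| + #|porbits w| == N + 2)].

(* reach L x : the origin of edge x is joined to the pointed vertex v       *)
(* (a vertex = set of its outgoing edges) by an oriented path of length <= L *)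
Fixpoint reach N (b w : {perm 'I_N}) (v : {set 'I_N}) (L : nat) (x : 'I_N)
  : bool :=
  if L is L'.+1 then
    reach b w v L' x
    || [exists e in porbit (vertex_perm b w) x, reach b w v L' (b e)]
  else x \in v.

Definition has_type N (b w : {perm 'I_N}) (v : {set 'I_N}) (j : nat)
  (x : 'I_N) : bool :=
  reach b w v j x && ((j == 0) || ~~ reach b w v j.-1 x).

Definition root_ok (i N : nat) (b w : {perm 'I_N.+1}) (v : {set 'I_N.+1})
  : bool :=
  [exists j : 'I_i.+1, [&& 0 < (j : nat), has_type b w v j ord0
                          & has_type b w v j.-1 (b ord0)]].

Local Open Scope ring_scope.

(* Formal variables: x_k is the variable 'X_k of {mpoly rat[M.+1]}          *)
(* (variable 0 unused); weight of a constellation = prod of x_k over white  *)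
(* faces of degree kp.                                                       *)
Definition map_weight (p M N : nat) (w : {perm 'I_N}) : {mpoly rat[M.+1]} :=
  \prod_(C in porbits w) 'X_(inord (#|C| %/ p)).

(* Truncation at M of V_i: 1 + the generating function of pointed rooted    *)
(* p-constellations with at most M*p edges (i.e. monomial weight <= M).     *)
(* Rooted maps up to isomorphism with N.+1 edges are counted as labelled    *)
(* structures on 'I_N.+1 with root edge ord0, divided by N`! (rooted maps   *)
(* have no non-trivial automorphism).                                        *)
Definition Vtrunc (p M i : nat) : {mpoly rat[M.+1]} :=
  1 + \sum_(N < M * p)
        ((N`!)%:R^-1 : rat) *:
        \sum_(b : {perm 'I_N.+1}) \sum_(w : {perm 'I_N.+1})
           \sum_(v in porbits (vertex_perm b w)
                 | is_constellation p b w && root_ok i b w v)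
              map_weight p M w.

Definition pstep (p : nat) (s : bool) : int := if s then (p.-1)%:Z else -1.

Definition heights (p r : nat) (s : seq bool) : seq int :=
  scanl (fun h b => h + pstep p b) (r%:Z) s.

Definition ppath_ok (p r : nat) (s : seq bool) : bool :=
  all (fun h => 0 <= h) (heights p r s) && (last (r%:Z) (heights p r s) == 0).

Definition ppath_weight (R : comRingType) (p : nat) (V : nat -> R) (r : nat)
  (s : seq bool) : R :=
  \prod_(hb <- zip (belast (r%:Z) (heights p r s)) s | ~~ hb.2) V `|hb.1|%N.

(* F_n^(r): paths from (-r, r) to (np, 0), i.e. with n*p + r steps *)
Definition Fpath (R : comRingType) (p : nat) (V : nat -> R) (n r : nat) : R :=
  \sum_(s : (n * p + r).-tuple bool | ppath_ok p r s) ppath_weight p V r s.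

Definition qk (p k : nat) : nat := k %/ p.-1.
Definition rk (p k : nat) : nat := k - p.-1 * qk p k.

Definition Hdet (R : comRingType) (p : nat) (V : nat -> R) (m n : nat) : R :=
  \det (\matrix_(i < n.+1, j < n.+1)
          Fpath p V (qk p (i + m) + j) (rk p (i + m))).

(* Hs V m k = H^{p,m}_{k-1}, with the convention H^{p,m}_{-1} = 1 *)
Definition Hs (R : comRingType) (p : nat) (V : nat -> R) (m k : nat) : R :=
  if k is k'.+1 then Hdet p V m k' else 1.

(* Formal power series in x_1, x_2, ... given by coherent truncations.       *)
(* Equality of series: equality of all coefficients of monomials of weight  *)
(* <= M in the M-th truncation, for every M.                                  *)

Definition mweight M (mm : 'X_{1..M.+1}) : nat := (\sum_(i < M.+1) i * mm i)%N.

Definition series_eq (A B : forall M : nat, {mpoly rat[M.+1]}) : Prop :=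
  forall M (mm : 'X_{1..M.+1}), (mweight mm <= M)%N -> (A M)@_mm = (B M)@_mm.

(* invertible formal power series (over Q): nonzero constant term *)
Definition series_unit (A : forall M : nat, {mpoly rat[M.+1]}) : Prop :=
  forall M, (A M)@_0%MM != 0.

(* Cut each p-path counted by the entry (i, j) of the Hankel matrix of
   H^{p,m}_n after its first i + q_{i+m} steps.  As it starts at height
   r_{i+m} and i + m = q_{i+m} (p-1) + r_{i+m}, the cut point is at a height
   hp + m with h <= i, so the matrix is L U, where L_{ih} counts the initial
   pieces and U_{hj} the paths of length jp + m from height hp + m down to 0.
   L is lower unitriangular (only the all-rise piece reaches height ip + m)
   and U is upper triangular with U_{jj} = V_1 ... V_{jp+m} (only the all-fall
   path), so H^{p,m}_n = prod_{j<=n} prod_{t<=jp+m} V_t for any sequence V and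
   the corollary telescopes.  The determinants are invertible series because
   every V_i has constant term 1. *)

From mathcomp Require Import all_boot all_order all_algebra all_fingroup.
From mathcomp Require Import mpoly.
From mathcomp Require Import zify ring.
Set Implicit Arguments. Unset Strict Implicit. Unset Printing Implicit Defensive.
Import GRing.Theory Num.Theory.
Local Open Scope ring_scope.

Lemma sum_tuple_cat (R : nmodType) (T : finType) n1 n2 (F : seq T -> R) :
  \sum_(s : (n1 + n2).-tuple T) F s =
  \sum_(s1 : n1.-tuple T) \sum_(s2 : n2.-tuple T) F (s1 ++ s2).
Proof.
have take_sz (s : (n1 + n2).-tuple T) : size (take n1 s) == n1.
  by rewrite size_takel // size_tuple leq_addr.
have drop_sz (s : (n1 + n2).-tuple T) : size (drop n1 s) == n2.
  by rewrite size_drop size_tuple addKn.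
rewrite pair_big /= (reindex (fun st => cat_tuple st.1 st.2)) //=.
exists (fun s => (Tuple (take_sz s), Tuple (drop_sz s))) => [[s1 s2] _|s _].
  by congr pair; apply: val_inj; rewrite /= ?take_size_cat ?drop_size_cat
     ?size_tuple.
by apply: val_inj; rewrite /= cat_take_drop.
Qed.

Section PathWeight.
Variables (R : comNzRingType) (p : nat) (V : nat -> R).

Definition pend (h : int) (s : seq bool) : int :=
  foldl (fun h b => h + pstep p b) h s.

Fixpoint pweight (h : int) (s : seq bool) (g : int) : R :=
  if 0 <= h then
    if s is b :: s' then
      (if b then 1 else V `|h|%N) * pweight (h + pstep p b) s' g
    else (h == g)%:R
  else 0.

Lemma pweightE (h : int) (s : seq bool) (g : int) : 0 <= h ->
  pweight h s g =
  (all (fun h => 0 <= h) (scanl (fun h b => h + pstep p b) h s)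
    && (last h (scanl (fun h b => h + pstep p b) h s) == g))%:R *
  \prod_(hb <- zip (belast h (scanl (fun h b => h + pstep p b) h s)) s | ~~ hb.2)
     V `|hb.1|%N.
Proof.
elim: s h => [|b s IH] h h0 /=; first by rewrite h0 big_nil mulr1.
rewrite h0 big_cons /=.
have [hb0|hb_neg] := boolP (0 <= h + pstep p b).
  by rewrite IH //; case: b {hb0} => /=; ring.
by case: s {IH} => [|? ?]; rewrite /= (negbTE hb_neg) !mul0r mulr0.
Qed.

Lemma Fpath_pweight n r :
  Fpath p V n r = \sum_(s : (n * p + r).-tuple bool) pweight r%:Z s 0.
Proof.
rewrite /Fpath big_mkcond; apply: eq_bigr => s _.
rewrite pweightE // /ppath_ok /ppath_weight /heights.
by case: ifP; rewrite ?mul1r ?mul0r.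
Qed.

Lemma pend_count (h : int) (s : seq bool) : (0 < p)%N ->
  pend h s = h + (count id s * p)%N%:Z - (size s)%:Z.
Proof.
move=> p_gt0; elim: s h => [|b s IH] h /=; first by rewrite subr0 addr0.
by rewrite /pend /= -/(pend _ s) IH; case: b => /=; lia.
Qed.

Lemma pweight_neq0_end h s g : pweight h s g != 0 -> g = pend h s.
Proof.
elim: s h => [|b s IH] h /=; case: (0 <= h); rewrite ?eqxx //.
  by have [->|ne] := eqVneq h g; rewrite ?eqxx // (negbTE ne) eqxx.
by move=> nz; apply: IH; apply: contraNneq nz => ->; rewrite mulr0.
Qed.

Lemma pweight_neq0_ge0 h s g : pweight h s g != 0 -> 0 <= g.
Proof.
elim: s h => [|b s IH] h /=; case: (boolP (0 <= h)); rewrite ?eqxx //.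
  by move=> h0; have [<-|ne] := eqVneq h g; rewrite ?eqxx // (negbTE ne) eqxx.
move=> _ nz; apply: (IH (h + pstep p b)).
by apply: contraNneq nz => ->; rewrite mulr0.
Qed.

Lemma pweight_eq0 h s g : g != pend h s -> pweight h s g = 0.
Proof. by move=> ne; apply/eqP; apply: contraNT ne => /pweight_neq0_end ->. Qed.

Lemma pweight_cat h s1 s2 g :
  pweight h (s1 ++ s2) g = pweight h s1 (pend h s1) * pweight (pend h s1) s2 g.
Proof.
elim: s1 h => [|b s IH] h /=.
  by case: s2 => [|? ?] /=; case: (0 <= h); rewrite ?eqxx ?mul1r ?mul0r.
by case: (0 <= h); rewrite ?mul0r // IH mulrA.
Qed.

Lemma pweight_rises h n g :
  pweight h (nseq n true) g = ((0 <= h) && (g == h + (n * p.-1)%N%:Z))%:R.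
Proof.
elim: n h => [|n IH] h /=; first by case: (0 <= h); rewrite //= addr0 eq_sym.
have [h0|] //= := boolP (0 <= h).
by rewrite mul1r IH ler_wpDr //=; congr ((g == _)%:R); lia.
Qed.

Lemma pweight_falls n : pweight n%:Z (nseq n false) 0 = \prod_(t < n) V t.+1.
Proof.
elim: n => [|n IH] /=; first by rewrite big_ord0.
rewrite big_ord_recr /= mulrC (_ : n.+1%:Z + pstep p false = n) ?IH //.
by rewrite /pstep; lia.
Qed.

End PathWeight.

Lemma qk_rkE p k : k = (qk p k * p.-1 + rk p k)%N.
Proof. by rewrite /rk /qk; have := divn_eq k p.-1; lia. Qed.

Lemma nseq_true_count (s : seq bool) :
  count id s = size s -> s = nseq (size s) true.
Proof.
move=> cnt; apply/all_pred1P.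
by rewrite (eq_all (a2 := id)) ?all_count ?cnt // => -[].
Qed.

Lemma nseq_false_count (s : seq bool) :
  count id s = 0%N -> s = nseq (size s) false.
Proof.
move=> cnt; apply/all_pred1P.
by rewrite (eq_all (a2 := predC id)) ?all_predC ?has_count ?cnt // => -[].
Qed.

Section HankelFactorization.
Variables (R : comNzRingType) (p : nat) (V : nat -> R) (m n : nat).
Hypotheses (p_gt1 : (1 < p)%N) (m_lt_p : (m < p)%N).

Let q i := qk p (i + m).
Let r i := rk p (i + m).

Lemma cut_height i s g : size s = (i + q i)%N -> pweight p V (r i)%:Z s g != 0 ->
  [/\ q i <= count id s, count id s - q i <= i
    & g = ((count id s - q i) * p + m)%N%:Z]%N.
Proof.
move=> sz nz; have g_ge0 := pweight_neq0_ge0 nz.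
have := pweight_neq0_end nz; rewrite pend_count ?sz; last lia.
have := qk_rkE p (i + m); have := count_size id s; rewrite sz -/(q i) -/(r i).
case: p p_gt1 m_lt_p => [|P] //= _ ltm cnt_le decomp g_eq.
have q_le : (q i <= count id s)%N by nia.
split => //; nia.
Qed.

Lemma tail_count h j s : size s = (j * p + m)%N ->
  pweight p V (h * p + m)%N%:Z s 0 != 0 -> (h + count id s = j)%N.
Proof.
move=> sz nz; have := pweight_neq0_end nz; rewrite pend_count ?sz; last lia.
have := count_size id s; rewrite sz; nia.
Qed.

Definition Lfactor : 'M[R]_n.+1 := \matrix_(i, h)
  \sum_(s : (i + q i).-tuple bool) pweight p V (r i)%:Z s (h * p + m)%N%:Z.

Definition Ufactor : 'M[R]_n.+1 := \matrix_(h, j)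
  \sum_(s : (j * p + m).-tuple bool) pweight p V (h * p + m)%N%:Z s 0.

Lemma Lfactor_upper (i h : 'I_n.+1) : (i < h)%N -> Lfactor i h = 0.
Proof.
move=> lt_ih; rewrite mxE big1 // => s _; apply/eqP; apply: contraT => nz.
have [_ le_i eq_h] := cut_height (size_tuple s) nz.
move/eqP: eq_h; rewrite eqz_nat eqn_add2r eqn_mul2r; lia.
Qed.

Lemma Lfactor_diag (i : 'I_n.+1) : Lfactor i i = 1.
Proof.
rewrite mxE (bigD1 (nseq_tuple (i + q i) true)) //= big1 ?addr0.
  rewrite pweight_rises /=; have := qk_rkE p (i + m); rewrite -/(q i) -/(r i).
  by case: p p_gt1 => [|P] //= _ decomp; rewrite (_ : (_ == _) = true) //; lia.
move=> s ne_s; apply/eqP; apply: contraT => nz.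
have [le_q _ /eqP] := cut_height (size_tuple s) nz.
rewrite eqz_nat eqn_add2r eqn_mul2r => /orP[/eqP|/eqP]; first lia.
move=> eq_i; have := count_size id s; rewrite size_tuple => cnt_le.
have /nseq_true_count : count id s = size s by rewrite size_tuple; lia.
by rewrite size_tuple => eq_s; case/eqP: ne_s; apply: val_inj.
Qed.

Lemma Ufactor_lower (h j : 'I_n.+1) : (j < h)%N -> Ufactor h j = 0.
Proof.
move=> lt_jh; rewrite mxE big1 // => s _; apply/eqP; apply: contraT => nz.
by have := tail_count (size_tuple s) nz; lia.
Qed.

Lemma Ufactor_diag (j : 'I_n.+1) : Ufactor j j = \prod_(t < j * p + m) V t.+1.
Proof.
rewrite mxE (bigD1 (nseq_tuple (j * p + m) false)) //= big1 ?addr0.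
  by rewrite pweight_falls.
move=> s ne_s; apply/eqP; apply: contraT => nz.
have /nseq_false_count : count id s = 0%N.
  by have := tail_count (size_tuple s) nz; lia.
by rewrite size_tuple => eq_s; case/eqP: ne_s; apply: val_inj.
Qed.

Lemma pweight_cut (i : 'I_n.+1) s1 s2 : size s1 = (i + q i)%N ->
  \sum_(h < n.+1) pweight p V (r i)%:Z s1 (h * p + m)%N%:Z
                  * pweight p V (h * p + m)%N%:Z s2 0
  = pweight p V (r i)%:Z (s1 ++ s2) 0.
Proof.
move=> sz; rewrite pweight_cat.
set g := pend p (r i)%:Z s1.
have [z1|nz] := eqVneq (pweight p V (r i)%:Z s1 g) 0.
  rewrite z1 mul0r big1 // => h _.
  have [->|ne] := eqVneq (h * p + m)%N%:Z g; first by rewrite z1 mul0r.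
  by rewrite pweight_eq0 ?mul0r.
have [_ le_i eq_g] := cut_height sz nz.
have lt_h : (count id s1 - q i < n.+1)%N by have := ltn_ord i; lia.
rewrite (bigD1 (Ordinal lt_h)) //= -eq_g big1 ?addr0 // => h ne_h.
rewrite pweight_eq0 ?mul0r // -/g eq_g eqz_nat eqn_add2r eqn_mul2r.
by apply/norP; split; [lia | apply: contra ne_h => /eqP eq_h; apply/eqP/val_inj].
Qed.

Lemma hankel_LU : \matrix_(i < n.+1, j < n.+1)
    Fpath p V (qk p (i + m) + j) (rk p (i + m)) = Lfactor *m Ufactor.
Proof.
apply/matrixP => i j; rewrite !mxE Fpath_pweight.
have -> : ((q i + j) * p + r i = (i + q i) + (j * p + m))%N.
  have := qk_rkE p (i + m); rewrite -/(q i) -/(r i).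
  by case: p p_gt1 => [|P] //= _; nia.
rewrite (sum_tuple_cat _ _ (fun s => pweight p V (r i)%:Z s 0)).
under eq_bigr => s1 _ do under eq_bigr => s2 _ do
  rewrite -(pweight_cut s2 (size_tuple s1)).
under eq_bigr => s1 _ do rewrite exchange_big.
rewrite exchange_big; apply: eq_bigr => h _; rewrite !mxE big_distrl.
by apply: eq_bigr => s1 _; rewrite big_distrr.
Qed.

Lemma Hdet_prod : Hdet p V m n = \prod_(j < n.+1) \prod_(t < j * p + m) V t.+1.
Proof.
rewrite /Hdet hankel_LU det_mulmx det_trig; last first.
  by apply/is_trig_mxP => i h; apply: Lfactor_upper.
rewrite big1 ?mul1r => [|i _]; last exact: Lfactor_diag.
rewrite -det_tr det_trig; last first.
  by apply/is_trig_mxP => i j lt_ij; rewrite mxE; apply: Ufactor_lower.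
by apply: eq_bigr => j _; rewrite mxE Ufactor_diag.
Qed.

End HankelFactorization.

Section Telescoping.
Variables (R : comNzRingType) (p : nat) (V : nat -> R).
Hypothesis p_gt1 : (1 < p)%N.

Lemma Hs_prod m k : (m < p)%N ->
  Hs p V m k = \prod_(j < k) \prod_(t < j * p + m) V t.+1.
Proof. by case: k => [|k] m_lt_p; rewrite ?big_ord0 //= Hdet_prod. Qed.

Lemma Hs_recurrence m n : (0 < m < p)%N ->
  V (p * n + m) * Hs p V m n * Hs p V m.-1 n.+1 = Hs p V m n.+1 * Hs p V m.-1 n.
Proof.
case: m => [|m] // /andP[_ m_lt_p]; rewrite !Hs_prod ?(ltnW m_lt_p) //=.
rewrite !big_ord_recr /= (_ : (n * p + m.+1 = (n * p + m).+1)%N) ?addnS //.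
by rewrite big_ord_recr /= mulnC; ring.
Qed.

Lemma Hs_recurrence0 n :
  V (p * n.+1) * Hs p V 0 n.+1 * Hs p V p.-1 n.+1 = Hs p V 0 n.+2 * Hs p V p.-1 n.
Proof.
have [p_gt0 p1_lt_p] : (0 < p)%N /\ (p.-1 < p)%N by split; lia.
rewrite !Hs_prod // [in RHS]big_ord_recr [X in _ * X = _]big_ord_recr /=.
have -> : (n.+1 * p + 0 = (n * p + p.-1).+1)%N by lia.
have -> : (p * n.+1 = (n * p + p.-1).+1)%N by lia.
by rewrite [\prod_(t < (n * p + p.-1).+1) _]big_ord_recr /=; ring.
Qed.

End Telescoping.

Lemma map_weight_coef0 p M N (w : {perm 'I_N.+1}) : (map_weight p M w)@_0 = 0.
Proof.
rewrite /map_weight rmorph_prod (bigD1 (porbit w ord0)) ?imset_f //=.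
by rewrite mcoeffX mnm1_eq0 mul0r.
Qed.

Lemma Vtrunc_coef0 p M i : (Vtrunc p M i)@_0 = 1.
Proof.
rewrite /Vtrunc mcoeffD mcoeff1 eqxx raddf_sum big1 ?addr0 // => N _.
rewrite /= mcoeffZ raddf_sum big1 ?mulr0 // => b _.
rewrite /= raddf_sum big1 // => w _; rewrite /= raddf_sum big1 // => v _.
exact: map_weight_coef0.
Qed.

Lemma series_unit_Hs p m k : (1 < p)%N -> (m < p)%N ->
  series_unit (fun M => Hs p (Vtrunc p M) m k).
Proof.
move=> p_gt1 m_lt_p M; rewrite Hs_prod // !rmorph_prod big1 ?oner_neq0 // => j _.
by rewrite rmorph_prod big1 // => t _; apply: Vtrunc_coef0.
Qed.

Theorem corollary1 (p m n : nat) : (2 <= p)%N -> (m < p)%N ->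
  ((0 < m)%N ->
     series_unit (fun M => Hs p (Vtrunc p M) m n)
     /\ series_unit (fun M => Hs p (Vtrunc p M) m.-1 n.+1)
     /\ series_eq
          (fun M => Vtrunc p M (p * n + m)
                    * Hs p (Vtrunc p M) m n * Hs p (Vtrunc p M) m.-1 n.+1)
          (fun M => Hs p (Vtrunc p M) m n.+1 * Hs p (Vtrunc p M) m.-1 n))
  /\
  (m = 0%N -> (0 < n)%N ->
     series_unit (fun M => Hs p (Vtrunc p M) 0 n)
     /\ series_unit (fun M => Hs p (Vtrunc p M) p.-1 n)
     /\ series_eq
          (fun M => Vtrunc p M (p * n)
                    * Hs p (Vtrunc p M) 0 n * Hs p (Vtrunc p M) p.-1 n)
          (fun M => Hs p (Vtrunc p M) 0 n.+1 * Hs p (Vtrunc p M) p.-1 n.-1)).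
Proof.
move=> p_gt1 m_lt_p; split=> [m_gt0 | _ n_gt0].
  split; [|split]; try (apply: series_unit_Hs; lia).
  by move=> M mm _; rewrite Hs_recurrence ?m_gt0.
split; [|split]; try (apply: series_unit_Hs; lia).
by case: n n_gt0 => [|n] // _ M mm _; rewrite Hs_recurrence0.
Qed.
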